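(* Let $\Gamma$ be a finite connected $(G,3)$-geodesic-transitive graph of girth $4$ or $5$, where $G\le \mathrm{Aut}(\Gamma)$. Let $N$ be a normal subgroup of $G$ having at least $3$ orbits on $V(\Gamma)$. Then $\Gamma$ is a cover of the normal quotient $\Gamma_N$, the graph $\Gamma_N$ is $(G/N,s')$-geodesic-transitive where $s'=\min\{3,\mathrm{diam}(\Gamma_N)\}$, and one of the following holds: (1) $\Gamma_N$ is a complete graph; (2) $\Gamma_N$ is a $(G/N,2)$-arc-transitive strongly regular graph with girth $4$ or $5$; (3) $\Gamma_N$ has diameter at least $3$ and the same girth as $\Gamma$.
   Context: All graphs are finite, simple and undirected. For a graph $\Gamma$, $d_\Gamma(u,v)$ denotes distance. An $s$-arc is a sequence $(v_0,\dots,v_s)$ of vertices with $v_i,v_{i+1}$ adjacent and $v_{j-1}\neq v_{j+1}$ for $1\le j\le s-1$. An $s$-geodesic is a path $(v_0,\dots,v_s)$ with $d_\Gamma(v_0,v_s)=s$. For $G\le\mathrm{Aut}(\Gamma)$, $\Gamma$ is $(G,s)$-geodesic-transitive if $\Gamma$ has an $s$-geodesic and $G$ is transitive on the set of $i$-geodesics for each $i\le s$ (the $0$-geodesics being vertices); $\Gamma$ is $(G,s)$-arc-transitive if $G$ is transitive on the set of $i$-arcs for each $i\le s$. For $N\trianglelefteq G$, the normal quotient $\Gamma_N$ is the graph whose vertices are the $N$-orbits on $V(\Gamma)$, two distinct orbits $B,C$ being adjacent iff some vertex of $B$ is adjacent to some vertex of $C$; $G/N$ acts on $\Gamma_N$.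 $\Gamma$ is a cover of $\Gamma_N$ if for each edge $\{B,C\}$ of $\Gamma_N$ and each $v\in B$, $v$ is adjacent to exactly one vertex of $C$. A strongly regular graph with parameters $(n,k,a,c)$ is a connected $k$-regular graph on $n$ vertices in which adjacent vertices have $a$ common neighbours and distinct non-adjacent vertices have $c$ common neighbours. *)

From mathcomp Require Import all_boot all_fingroup.
Set Implicit Arguments. Unset Strict Implicit. Unset Printing Implicit Defensive.

Section GraphDefs.
Variables (V : finType) (VS : {set V}) (e : rel V).

Definition adj (x y : V) : bool := [&& x \in VS, y \in VS & e x y].

Fixpoint ball (k : nat) (u : V) : {set V} :=
  if k is k'.+1 then ball k' u :|: [set y | [exists x in ball k' u, adj x y]]
  else [set u].

Definition connectedg : Prop :=
  forall x y, x \in VS -> y \in VS -> y \in ball #|VS| x.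

(* graph distance (meaningful for connected graphs) *)
Definition dist (u v : V) : nat := find (fun k => v \in ball k u) (iota 0 #|VS|.+1).

Definition diam : nat := \max_(u in VS) \max_(v in VS) dist u v.

(* x :: p is an (size p)-geodesic *)
Definition geodesic (x : V) (p : seq V) : bool :=
  [&& x \in VS, path adj x p & dist x (last x p) == size p].

(* x :: p is an (size p)-arc *)
Definition sarc (x : V) (p : seq V) : bool :=
  [&& x \in VS, path adj x p &
      all (fun j => nth x (x :: p) j != nth x (x :: p) j.+2) (iota 0 (size p).-1)].

Definition has_cycle (k : nat) : bool :=
  [exists c : k.-tuple V, uniq c && path.cycle adj c].

Definition girth_is (g : nat) : Prop :=
  3 <= g /\ has_cycle g /\ forall k, 3 <= k < g -> ~~ has_cycle k.

Definition complete_graph : Prop :=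
  forall x y, x \in VS -> y \in VS -> x != y -> adj x y.

Definition strongly_regular : Prop :=
  connectedg /\ exists (n k a c : nat),
    [/\ #|VS| = n,
        forall x, x \in VS -> #|[set y in VS | adj x y]| = k,
        forall x y, adj x y -> #|[set z in VS | adj x z && adj y z]| = a &
        forall x y, x \in VS -> y \in VS -> x != y -> ~~ adj x y ->
          #|[set z in VS | adj x z && adj y z]| = c].

Variables (gT : finGroupType) (H : {set gT}) (act : gT -> V -> V).

Definition geodesic_transitive (s : nat) : Prop :=
  (exists x p, geodesic x p /\ size p = s) /\
  forall i, i <= s -> forall x p y q,
    geodesic x p -> geodesic y q -> size p = i -> size q = i ->
    exists2 h, h \in H & act h x = y /\ map (act h) p = q.

Definition arc_transitive (s : nat) : Prop :=
  forall i, i <= s -> forall x p y q,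
    sarc x p -> sarc y q -> size p = i -> size q = i ->
    exists2 h, h \in H & act h x = y /\ map (act h) p = q.

End GraphDefs.

Section Quotient.
Variables (T : finType) (e : rel T) (N : {group {perm T}}).

Definition Norbits : {set {set T}} := [set [set (n : {perm T}) x | n in N] | x : T].

Definition qadj : rel {set T} :=
  fun B C => (B != C) && [exists x in B, exists y in C, e x y].

Definition is_cover : Prop :=
  forall B C, adj Norbits qadj B C ->
    forall v, v \in B -> #|[set y in C | e v y]| = 1.

(* action of G/N on the vertices of Gamma_N: (N g) . B = g(B) *)
Definition qactN (c : coset_of N) (B : {set T}) : {set T} := [set (repr c) x | x in B].
End Quotient.

(* The neighbours of a vertex lie in pairwise distinct N-orbits, all different
   from its own: if two neighbours a, b of v shared an orbit, transitivity on the
   2-arcs (a, v, c) would put every neighbour of v in that orbit, and then the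
   orbits of two adjacent vertices would exhaust the connected graph, whereas N
   has at least three orbits. Hence Gamma covers Gamma_N, paths and geodesics of
   Gamma_N lift to paths and geodesics of Gamma, and transitivity of G on
   geodesics descends to G/N. Cycles of length 4 and 5 project to cycles of the
   same length. Conversely a triangle of Gamma_N (diameter at least 2), or a
   4-cycle of Gamma_N when Gamma has girth 5 and Gamma_N diameter at least 3,
   lifts to a 2-geodesic (resp. 3-geodesic) of Gamma whose end orbits are
   adjacent, while transitivity maps it onto one whose end orbits are at
   distance 2 (resp. 3). *)

From mathcomp Require Import all_boot all_fingroup zify.
Set Implicit Arguments. Unset Strict Implicit. Unset Printing Implicit Defensive.

Section Graph.
Variables (V : finType) (VS : {set V}) (e : rel V).
Local Notation adj := (adj VS e).
Local Notation ball := (ball VS e).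
Local Notation dist := (dist VS e).
Local Notation diam := (diam VS e).
Local Notation geodesic := (geodesic VS e).
Local Notation has_cycle := (has_cycle VS e).

Lemma ballP k u y :
  reflect (exists p, [/\ path adj u p, last u p = y & size p <= k]) (y \in ball k u).
Proof.
apply: (iffP idP).
  elim: k y => [|k IHk] y /=; first by rewrite inE => /eqP->; exists [::].
  rewrite inE => /orP [/IHk [p [up pl pk]]|].
    by exists p; rewrite leqW.
  rewrite inE => /existsP [x /andP [/IHk [p [up pl pk]] xy]].
  by exists (rcons p y); rewrite rcons_path last_rcons size_rcons up pl xy.
elim: k y => [|k IHk] y [p [up <- pk]] /=.
  by case: p up pk; rewrite // inE.
rewrite inE; have [pk'|pk'] := leqP (size p) k.
  by rewrite IHk //; exists p.
case/lastP: p up pk pk' => // q z; rewrite rcons_path last_rcons size_rcons.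
case/andP=> uq qz qk qk'; apply/orP; right; rewrite inE.
by apply/existsP; exists (last u q); rewrite qz IHk //; exists q.
Qed.

Lemma ballS k k' u : k <= k' -> {subset ball k u <= ball k' u}.
Proof.
by move=> le_k y /ballP [p [up pl pk]]; apply/ballP; exists p; rewrite (leq_trans pk).
Qed.

Lemma path_allVS u p : path adj u p -> all (fun x => x \in VS) p.
Proof.
by elim: p u => //= x p IHp u /andP [/and3P [_ -> _] /IHp].
Qed.

Lemma last_pathVS u p : u \in VS -> path adj u p -> last u p \in VS.
Proof.
case/lastP: p => // p x _ /path_allVS /allP; rewrite last_rcons; apply.
by rewrite mem_rcons inE eqxx.
Qed.

Lemma shorten_path_card u p : u \in VS -> path adj u p ->
  exists q, [/\ path adj u q, last u q = last u p & size q < #|VS|].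
Proof.
move=> uVS up; case: (shortenP up) => q uq uniq_q _; exists q; split=> //.
rewrite cardE; apply: (@uniq_leq_size _ (u :: q)) => // x.
by rewrite inE mem_enum => /predU1P [->|/(allP (path_allVS uq))].
Qed.

Lemma has_cycleP k :
  reflect (exists s, [/\ size s = k, uniq s & path.cycle adj s]) (has_cycle k).
Proof.
apply: (iffP existsP) => [[c /andP [uc cc]]|[s [<- us cs]]].
  by exists c; rewrite size_tuple.
by exists (in_tuple s); rewrite us.
Qed.

Lemma girth4 : ~~ has_cycle 3 -> has_cycle 4 -> girth_is VS e 4.
Proof. by move=> no3 c4; do 2!split=> //; case=> [|[|[|[]]]]. Qed.

Lemma girth5 : ~~ has_cycle 3 -> ~~ has_cycle 4 -> has_cycle 5 -> girth_is VS e 5.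
Proof. by move=> no3 no4 c5; do 2!split=> //; case=> [|[|[|[|[]]]]]. Qed.

Lemma girth_no_triangle g : girth_is VS e g -> 3 < g -> ~~ has_cycle 3.
Proof. by move=> [_ [_ short]] g3; apply: short; rewrite leqnn. Qed.

Lemma leq_dist_diam u v : u \in VS -> v \in VS -> dist u v <= diam.
Proof.
move=> uVS vVS; apply: leq_trans (leq_bigmax_cond u uVS).
exact: (leq_bigmax_cond v vVS).
Qed.

Lemma diam_attained : 0 < #|VS| ->
  exists u v, [/\ u \in VS, v \in VS & dist u v = diam].
Proof.
move=> VS_gt0; rewrite /diam.
have [u uVS ->] := eq_bigmax_cond (fun u => \max_(v in VS) dist u v) VS_gt0.
by have [v vVS ->] := eq_bigmax_cond (dist u) VS_gt0; exists u, v.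
Qed.

Section Connected.
Hypothesis conn : connectedg VS e.

Lemma ball_dist u y : u \in VS -> y \in VS ->
  y \in ball (dist u y) u /\ forall k, k < dist u y -> y \notin ball k u.
Proof.
move=> uVS yVS.
have has_y : has (fun k => y \in ball k u) (iota 0 #|VS|.+1).
  by apply/hasP; exists #|VS|; [rewrite mem_iota add0n ltnSn | exact: conn uVS yVS].
have lt_dist := has_y; rewrite has_find size_iota in lt_dist.
split; first by have := nth_find 0 has_y; rewrite nth_iota.
move=> k lt_k; have := before_find 0 lt_k.
by rewrite nth_iota ?(ltn_trans lt_k) // => ->.
Qed.

Lemma dist_leP u y k : u \in VS -> y \in VS ->
  reflect (exists p, [/\ path adj u p, last u p = y & size p <= k]) (dist u y <= k).
Proof.
move=> uVS yVS; have [y_ball y_min] := ball_dist uVS yVS.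
apply: (iffP idP) => [le_k|/ballP y_k]; first exact/ballP/(ballS le_k).
by rewrite leqNgt; apply: contraL y_k => /y_min.
Qed.

Lemma dist_path u p : u \in VS -> path adj u p -> dist u (last u p) <= size p.
Proof.
by move=> uVS up; apply/dist_leP; rewrite ?last_pathVS //; exists p.
Qed.

Lemma geodesicP u p : reflect
  [/\ u \in VS, path adj u p &
      forall q, path adj u q -> last u q = last u p -> size p <= size q]
  (geodesic u p).
Proof.
apply: (iffP and3P) => [[uVS up /eqP <-]|[uVS up p_min]].
  by split=> // q uq <-; apply: dist_path.
split=> //; rewrite eqn_leq dist_path //=.
have [/ballP [q [uq ql qd]] _] := ball_dist uVS (last_pathVS uVS up).
exact: leq_trans (p_min q uq ql) qd.
Qed.

Lemma exists_geodesic u v s : u \in VS -> v \in VS -> s <= dist u v ->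
  exists p, geodesic u p /\ size p = s.
Proof.
move=> uVS vVS le_s; have [/ballP [p [up pl pd]] _] := ball_dist uVS vVS.
have size_p : size p = dist u v by apply/eqP; rewrite eqn_leq pd -{1}pl dist_path.
exists (take s p); split; last by rewrite size_take_min size_p; apply/minn_idPl.
move: up; rewrite -{1}(cat_take_drop s p) cat_path => /andP [ut td].
apply/geodesicP; split=> // q uq ql; rewrite leqNgt; apply/negP => lt_q.
have uqd : path adj u (q ++ drop s p) by rewrite cat_path uq ql.
have := dist_path uVS uqd.
rewrite last_cat ql -last_cat cat_take_drop pl size_cat size_drop size_p.
by move: lt_q; rewrite size_take_min size_p (minn_idPl le_s); lia.
Qed.

Lemma exists_geodesic_diam s : 0 < #|VS| -> s <= diam ->
  exists u p, geodesic u p /\ size p = s.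
Proof.
move=> VS_gt0 le_s; have [u [v [uVS vVS duv]]] := diam_attained VS_gt0.
have [|p gp] := exists_geodesic uVS vVS (_ : s <= _); first by rewrite duv.
by exists u, p.
Qed.

Lemma adj_dist_le1 u v : adj u v -> dist u v <= 1.
Proof.
by case/and3P=> uVS vVS uv; apply/dist_leP => //; exists [:: v]; rewrite /= /adj uVS vVS uv.
Qed.

Lemma dist_le1_adj u v : u \in VS -> v \in VS -> u != v -> dist u v <= 1 -> adj u v.
Proof.
move=> uVS vVS neq_uv /(dist_leP _ uVS vVS) [[|w [|x p]] [up pl]] //.
  by move: neq_uv; rewrite -pl eqxx.
by rewrite -pl; case/andP: up.
Qed.

Lemma diam_le1_complete : diam <= 1 -> complete_graph VS e.
Proof.
move=> d_le1 u v uVS vVS neq_uv; apply: dist_le1_adj => //.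
exact: leq_trans (leq_dist_diam uVS vVS) d_le1.
Qed.

Lemma geodesic_transitive_le (gT : finGroupType) (H : {set gT}) act s t :
  s <= t -> geodesic_transitive VS e H act t -> geodesic_transitive VS e H act s.
Proof.
move=> le_st [[u [p [gp size_p]]] trans]; split; last first.
  by move=> i le_is; apply: trans; apply: leq_trans le_st.
case/and3P: gp => uVS up /eqP dp.
have [|q gq] := exists_geodesic uVS (last_pathVS uVS up) (_ : s <= _).
  by rewrite dp size_p.
by exists u, q.
Qed.

End Connected.
End Graph.

Section NormalOrbits.
Variables (T : finType) (N : {group {perm T}}).

Definition orbN (x : T) : {set T} := [set (n : {perm T}) x | n in N].

Lemma orbNP x y : reflect (exists2 n, n \in N & y = n x) (y \in orbN x).
Proof. exact: (iffP imsetP). Qed.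

Lemma orbN_refl x : x \in orbN x.
Proof. by apply/orbNP; exists 1%g; rewrite ?perm1. Qed.

Lemma orbN_act n x : n \in N -> orbN (n x) = orbN x.
Proof.
move=> Nn; apply/setP => y; apply/orbNP/orbNP => -[m Nm ->].
  by exists (n * m)%g; rewrite ?groupM ?permM.
by exists (n^-1 * m)%g; rewrite ?groupM ?groupV // permM permK.
Qed.

Lemma orbN_transl x y : y \in orbN x -> orbN y = orbN x.
Proof. by case/orbNP=> n Nn ->; apply: orbN_act. Qed.

Lemma mem_Norbits x : orbN x \in Norbits N.
Proof. exact: imset_f. Qed.

Lemma NorbitsP B : reflect (exists x, B = orbN x) (B \in Norbits N).
Proof. by apply: (iffP imsetP) => -[x]; exists x. Qed.

Lemma imset_orbN g x : g \in 'N(N)%g -> [set g y | y in orbN x] = orbN (g x).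
Proof.
move=> nNg; apply/setP => z; apply/imsetP/orbNP => [[_ /orbNP [m Nm ->] ->]|[m Nm ->]].
  exists (m ^ g)%g; first by rewrite memJ_norm.
  by rewrite !permM permK.
exists ((m ^ g^-1)%g x); first by apply/orbNP; exists (m ^ g^-1)%g; rewrite ?memJ_norm ?groupV.
by rewrite !permM invgK permKV.
Qed.

Lemma orbN_act_eq g x y : g \in 'N(N)%g -> orbN x = orbN y -> orbN (g x) = orbN (g y).
Proof. by move=> nNg Exy; rewrite -!imset_orbN // Exy. Qed.

Lemma qactN_orbN g x : g \in 'N(N)%g -> qactN (coset N g) (orbN x) = orbN (g x).
Proof.
move=> nNg; have : repr (coset N g) \in (N :* g)%g.
  by rewrite -val_coset //; apply: mem_repr_coset.
rewrite /qactN; case/rcosetP=> n Nn ->.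
have nNn : n \in 'N(N)%g by apply: subsetP (normG N) n Nn.
by rewrite (eq_imset _ (permM n g)) imset_comp imset_orbN // orbN_act // imset_orbN.
Qed.

Lemma map_qactN_orbN g p : g \in 'N(N)%g ->
  map (qactN (coset N g)) (map orbN p) = map orbN (map g p).
Proof. by move=> nNg; rewrite -!map_comp; apply: eq_map => x /=; apply: qactN_orbN. Qed.

End NormalOrbits.

Section NormalQuotient.
Variables (T : finType) (e : rel T) (G N : {group {perm T}}).
Hypotheses (esym : symmetric e) (eirr : irreflexive e)
  (eG : forall g, g \in G -> forall x y, e (g x) (g y) = e x y)
  (conn : connectedg [set: T] e) (nNG : (N <| G)%g)
  (N_orbits3 : 3 <= #|Norbits N|)
  (gt2 : geodesic_transitive [set: T] e G (fun g x => g x) 2)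
  (no_tri : ~~ has_cycle [set: T] e 3).

Local Notation orb := (orbN N).
Local Notation VN := (Norbits N).
Local Notation adjN := (adj VN (qadj e)).
Local Notation distN := (dist VN (qadj e)).
Local Notation dN := (diam VN (qadj e)).
Local Notation distT := (dist [set: T] e).
Local Notation geodT := (geodesic [set: T] e).
Local Notation cycleT := (has_cycle [set: T] e).
Local Notation cycleN := (has_cycle VN (qadj e)).

Lemma norm_G g : g \in G -> g \in 'N(N)%g.
Proof. exact: subsetP (normal_norm nNG) g. Qed.

Lemma e_permN n x y : n \in N -> e (n x) (n y) = e x y.
Proof. by move=> Nn; apply/eG/(subsetP (normal_sub nNG)). Qed.

Lemma adjT x y : adj [set: T] e x y = e x y.
Proof. by rewrite /adj !inE. Qed.

Lemma pathT x p : path (adj [set: T] e) x p = path e x p.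
Proof. exact: (eq_path adjT x p). Qed.

Lemma geodesicTP x p : reflect
  (path e x p /\ forall q, path e x q -> last x q = last x p -> size p <= size q)
  (geodT x p).
Proof.
apply: (iffP (geodesicP conn x p)) => [[_ xp p_min]|[xp p_min]].
  by split=> [|q]; rewrite -pathT //; apply: p_min.
by split=> // [|q]; rewrite ?inE pathT //; apply: p_min.
Qed.

Lemma geodesic0 x : geodT x [::].
Proof. by apply/geodesicTP. Qed.

Lemma geodesic1 x y : e x y -> geodT x [:: y].
Proof.
move=> xy; apply/geodesicTP; split=> [|[|z q] //= _ yx]; first by rewrite /= xy.
by rewrite yx eirr in xy.
Qed.

Lemma no_triangle x y z : e x y -> e y z -> e z x -> False.
Proof.
have neq a b : e a b -> a != b by move=> ab; apply: contraTneq ab => ->; rewrite eirr.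
move=> xy yz zx; apply: (negP no_tri); apply/has_cycleP; exists [:: x; y; z].
by rewrite /= !inE !adjT xy yz zx !negb_or !neq // esym.
Qed.

Lemma geodesic2 x y z : e x y -> e y z -> x != z -> geodT x [:: y; z].
Proof.
move=> xy yz neq_xz; apply/geodesicTP; split=> [|[|w [|? ?]] //= + zE]; first by rewrite /= xy yz.
  by rewrite zE eqxx in neq_xz.
by rewrite andbT zE => xz; case: (no_triangle xy yz); rewrite esym.
Qed.

Lemma transitive_vertices x x' : exists2 g, g \in G & g x = x'.
Proof.
case: gt2 => _ /(_ 0 isT _ _ _ _ (geodesic0 x) (geodesic0 x') erefl erefl).
by case=> g Gg [gx _]; exists g.
Qed.

Lemma transitive_arcs x y x' y' : e x y -> e x' y' ->
  exists2 g, g \in G & g x = x' /\ g y = y'.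
Proof.
move=> xy x'y'; case: gt2 => _ /(_ 1 isT _ _ _ _ (geodesic1 xy) (geodesic1 x'y') erefl erefl).
by case=> g Gg [gx [gy]]; exists g.
Qed.

Lemma transitive_2arcs x y z x' y' z' :
  e x y -> e y z -> x != z -> e x' y' -> e y' z' -> x' != z' ->
  exists2 g, g \in G & [/\ g x = x', g y = y' & g z = z'].
Proof.
move=> xy yz xz x'y' y'z' x'z'.
case: gt2 => _ /(_ 2 isT _ _ _ _ (geodesic2 xy yz xz) (geodesic2 x'y' y'z' x'z') erefl erefl).
by case=> g Gg [gx [gy gz]]; exists g.
Qed.

Lemma closed_setT (S : {set T}) v :
  (forall x y, x \in S -> e x y -> y \in S) -> v \in S -> S = setT.
Proof.
move=> S_closed Sv; apply/setP => y; rewrite inE.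
have /ballP [p [vp <- _]] := conn (in_setT v) (in_setT y); rewrite pathT in vp.
by elim: p v Sv vp => //= x p IHp v Sv /andP [vx xp]; apply: IHp xp; apply: S_closed vx.
Qed.

Lemma orbN_nbr v x y : orb x = orb v -> e x y -> exists2 z, e v z & orb z = orb y.
Proof.
move=> xv xy; have /orbNP [n Nn xE] : x \in orb v by rewrite -xv orbN_refl.
exists ((n^-1)%g y); first by rewrite -(e_permN _ _ Nn) permKV -xE.
by rewrite orbN_act ?groupV.
Qed.

(* If all neighbours of [v] lay in one orbit, vertex-transitivity would make the
   union of the orbits of [v] and [a] closed under adjacency. *)
Lemma nbrs_not_in_one_orbit v a : e v a -> ~ (forall c, e v c -> orb c = orb a).
Proof.
move=> va one_orb.
have a_nbrs c : e a c -> orb c = orb v.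
  have [h Gh hv] := transitive_vertices v a.
  have v_nbr z : e a z -> orb ((h^-1)%g z) = orb a.
    by move=> az; apply: one_orb; rewrite -(eG Gh) permKV hv.
  move=> ac; rewrite -(permKV h c) -(permKV h v).
  by apply: orbN_act_eq (norm_G Gh) _; rewrite !v_nbr // esym.
pose S := [set x | (orb x == orb v) || (orb x == orb a)].
have S_closed x y : x \in S -> e x y -> y \in S.
  rewrite !inE => /orP [] /eqP xE /(orbN_nbr xE) [z + <-].
    by move/one_orb ->; rewrite eqxx orbT.
  by move/a_nbrs ->; rewrite eqxx.
have S_T : S = setT by apply: (closed_setT (v := v) S_closed); rewrite inE eqxx.
have : VN \subset [set orb v; orb a].
  apply/subsetP => _ /NorbitsP [x ->]; have : x \in S by rewrite S_T.
  by rewrite !inE.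
by move/subset_leq_card/(leq_trans N_orbits3); rewrite cards2; case: (_ != _).
Qed.

Lemma nbr_orbN_inj v a b : e v a -> e v b -> orb a = orb b -> a = b.
Proof.
move=> va vb ab; have [//|neq_ab] := eqVneq a b.
exfalso; apply: (nbrs_not_in_one_orbit va) => c vc; have [-> //|neq_ac] := eqVneq a c.
have av : e a v by rewrite esym.
have [g Gg [ga _ gb]] := transitive_2arcs av vb neq_ab av vc neq_ac.
by rewrite -gb -(orbN_act_eq (norm_G Gg) ab) ga.
Qed.

Lemma edge_orbN_neq x y : e x y -> orb x != orb y.
Proof.
move=> xy; apply/eqP => xEy; apply: (nbrs_not_in_one_orbit xy) => c xc.
have [g Gg [gx gy]] := transitive_arcs xy xc.
by rewrite -gy -(orbN_act_eq (norm_G Gg) xEy) gx.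
Qed.

Lemma orbN_neq_2arc x y z : e x y -> e y z -> x != z -> orb x != orb z.
Proof.
by move=> xy yz; apply: contraNneq => /(nbr_orbN_inj _ yz) ->; rewrite // esym.
Qed.

Lemma adjN_orbN x y : e x y -> adjN (orb x) (orb y).
Proof.
move=> xy; rewrite /adj !mem_Norbits /qadj edge_orbN_neq //=.
by apply/existsP; exists x; rewrite orbN_refl; apply/existsP; exists y; rewrite orbN_refl.
Qed.

Lemma adjN_lift v C : adjN (orb v) C -> exists2 y, e v y & orb y = C.
Proof.
case/and3P=> _ /NorbitsP [z ->] /andP [_ /existsP [x /andP [vx /existsP [y /andP [zy xy]]]]].
have [w vw wy] := orbN_nbr (orbN_transl vx) xy.
by exists w; rewrite // wy (orbN_transl zy).
Qed.

Lemma adjN_sym B C : adjN B C -> adjN C B.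
Proof.
move=> BC; case/and3P: (BC) => /NorbitsP [v BE] _ _; rewrite BE in BC *.
by have [y vy <-] := adjN_lift BC; apply: adjN_orbN; rewrite esym.
Qed.

Lemma adjN_act g x y : g \in G -> adjN (orb x) (orb y) -> adjN (orb (g x)) (orb (g y)).
Proof.
move=> Gg /adjN_lift [z xz zy]; rewrite -(orbN_act_eq (norm_G Gg) zy).
by apply: adjN_orbN; rewrite eG.
Qed.

Lemma path_orbN v p : path e v p -> path adjN (orb v) (map orb p).
Proof. by elim: p v => //= x p IHp v /andP [vx xp]; rewrite adjN_orbN ?IHp. Qed.

Lemma lift_pathN v P : path adjN (orb v) P -> exists2 p, path e v p & map orb p = P.
Proof.
elim: P v => [|C P IHP] v /=; first by exists [::].
case/andP=> /adjN_lift [y vy <-] /IHP [p yp <-].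
by exists (y :: p); rewrite /= ?vy.
Qed.

Lemma is_coverN : is_cover e N.
Proof.
move=> B C BC v Bv.
have {Bv}BE : B = orb v by case/and3P: BC Bv => /NorbitsP [z ->] _ _ /orbN_transl ->.
rewrite BE in BC; have [y vy yC] := adjN_lift BC.
apply: (@eq_card1 _ y) => y'; rewrite !inE -yC.
apply/andP/eqP => [[/orbN_transl y'y vy']|->]; last by rewrite orbN_refl.
exact: nbr_orbN_inj vy' vy y'y.
Qed.

Lemma Norbits_gt0 : 0 < #|VN|.
Proof. exact: leq_trans N_orbits3. Qed.

Lemma connectedN : connectedg VN (qadj e).
Proof.
move=> _ _ /NorbitsP [x ->] /NorbitsP [y ->].
have /ballP [p [xp py _]] := conn (in_setT x) (in_setT y); rewrite pathT in xp.
have [q [xq ql size_q]] := shorten_path_card (mem_Norbits N x) (path_orbN xp).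
by apply/ballP; exists q; split=> //; [rewrite ql last_map py | exact: ltnW].
Qed.

Lemma distN_le x y : distN (orb x) (orb y) <= distT x y.
Proof.
case/(dist_leP conn _ (in_setT x) (in_setT y)): (leqnn (distT x y)) => p [xp py sp].
apply/(dist_leP connectedN _ (mem_Norbits N x) (mem_Norbits N y)).
by exists (map orb p); rewrite size_map last_map py path_orbN // -pathT.
Qed.

Lemma lift_geodesicN x P : geodesic VN (qadj e) (orb x) P ->
  exists2 p, geodT x p & map orb p = P.
Proof.
case/and3P=> _ /lift_pathN [p xp <-] /eqP dP; exists p => //.
rewrite /geodesic in_setT pathT xp eqn_leq dist_path ?in_setT ?pathT //=.
by rewrite -(size_map orb) -dP last_map distN_le.
Qed.

Lemma quotient_transport s i x p x' p' :
  geodesic_transitive [set: T] e G (fun g x => g x) s -> i <= s ->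
  geodT x p -> geodT x' p' -> size p = i -> size p' = i ->
  exists2 h, h \in (G / N)%g &
    qactN h (orb x) = orb x' /\ map (qactN h) (map orb p) = map orb p'.
Proof.
case=> _ gts le_is gp gp' sp sp'; have [g Gg [gx gp_p']] := gts i le_is _ _ _ _ gp gp' sp sp'.
exists (coset N g); first exact: mem_quotient.
by rewrite qactN_orbN ?map_qactN_orbN ?norm_G // gx gp_p'.
Qed.

Lemma quotient_geodesic_transitive s :
  geodesic_transitive [set: T] e G (fun g x => g x) s ->
  geodesic_transitive VN (qadj e) (G / N)%g (@qactN _ N) (minn s dN).
Proof.
move=> gts; split; first exact: (exists_geodesic_diam connectedN Norbits_gt0 (geq_minr s dN)).
move=> i le_i B P B' P' /[dup] /and3P [/NorbitsP [x ->] _ _] gP.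
move=> /[dup] /and3P [/NorbitsP [x' ->] _ _] gP' sP sP'.
have [p gp pP] := lift_geodesicN gP; have [p' gp' p'P'] := lift_geodesicN gP'.
rewrite -pP -p'P'; apply: quotient_transport gts (leq_trans le_i (geq_minl _ _)) gp gp' _ _.
  by rewrite -(size_map orb) pP.
by rewrite -(size_map orb) p'P'.
Qed.

Lemma lift_sarcN x P : size P <= 2 -> sarc VN (qadj e) (orb x) P ->
  exists2 p, geodT x p & map orb p = P.
Proof.
move=> size_P /and3P [_ /lift_pathN [p xp pP] distinct]; exists p => //.
move: size_P distinct; rewrite -pP size_map.
case: p xp {pP} => [|y [|z []]] //=; first by rewrite geodesic0.
  by rewrite andbT => xy _ _; apply: geodesic1.
rewrite !andbT => /andP [xy yz] _ orb_xz; apply: geodesic2 => //.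
by apply: contraNneq orb_xz => ->.
Qed.

Lemma quotient_arc_transitive2 : arc_transitive VN (qadj e) (G / N)%g (@qactN _ N) 2.
Proof.
move=> i le_i2 B P B' P' /[dup] /and3P [/NorbitsP [x ->] _ _] aP.
move=> /[dup] /and3P [/NorbitsP [x' ->] _ _] aP' sP sP'.
have [p gp pP] := lift_sarcN (leq_trans (eq_leq sP) le_i2) aP.
have [p' gp' p'P'] := lift_sarcN (leq_trans (eq_leq sP') le_i2) aP'.
rewrite -pP -p'P'; apply: quotient_transport gt2 le_i2 gp gp' _ _.
  by rewrite -(size_map orb) pP.
by rewrite -(size_map orb) p'P'.
Qed.

Lemma exists_2arc_distN2 : 1 < dN ->
  exists x y z, [/\ e x y, e y z, x != z & distN (orb x) (orb z) = 2].
Proof.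
move=> d2; have [B [P [gP sP]]] := exists_geodesic_diam connectedN Norbits_gt0 d2.
move: gP => /[dup] /and3P [/NorbitsP [x ->] _ _] /[dup] gP /lift_geodesicN [p gp pP].
case/and3P: gP => _ _ /eqP; rewrite -pP last_map size_map.
move: sP gp; rewrite -pP size_map; case: p {pP} => [|y [|z []]] //= _.
case/geodesicTP => /and3P [xy yz _] p_min dxz; exists x, y, z; split=> //.
by apply/eqP => xz; have := p_min [::] isT xz.
Qed.

Lemma triangle_freeN B C D : 1 < dN -> adjN B C -> adjN C D -> adjN D B -> False.
Proof.
move=> d2 BC CD DB; have [x [y [z [xy yz neq_xz dxz]]]] := exists_2arc_distN2 d2.
case/and3P: (BC) => /NorbitsP [v0 BE] _ _; subst B.
have [v1 v01 v1C] := adjN_lift BC; subst C.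
have [v2 v12 v2D] := adjN_lift CD; subst D.
have neq02 : v0 != v2 by apply: contraTneq DB => ->; rewrite /adj /qadj eqxx !andbF.
have [g Gg [gv0 _ gv2]] := transitive_2arcs v01 v12 neq02 xy yz neq_xz.
have := adj_dist_le1 connectedN (adjN_act Gg (adjN_sym DB)).
by rewrite gv0 gv2 dxz.
Qed.

Lemma no_3cycleN : 1 < dN -> ~~ cycleN 3.
Proof.
move=> d2; apply/negP => /has_cycleP [s [+ _]].
case: s => [|B [|C [|D [|? ?]]]] //= _ /and4P [BC CD DB _].
exact: triangle_freeN d2 BC CD DB.
Qed.

Lemma cycle4N : cycleT 4 -> cycleN 4.
Proof.
case/has_cycleP=> s [+ + +]; case: s => [|a [|b [|c [|f [|? ?]]]]] //= _.
rewrite !inE !negb_or => /and4P [/and3P [_ neq_ac _] /andP [_ neq_bf] _ _].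
case/and5P=> [ab bc cf fa _]; rewrite !adjT in ab bc cf fa.
apply/has_cycleP; exists [:: orb a; orb b; orb c; orb f]; split=> //=; last first.
  by rewrite !adjN_orbN.
rewrite !inE !negb_or !(edge_orbN_neq ab, edge_orbN_neq bc, edge_orbN_neq cf).
by rewrite (orbN_neq_2arc ab bc) // (orbN_neq_2arc bc cf) // eq_sym edge_orbN_neq.
Qed.

Lemma cycle5N : cycleT 5 -> cycleN 5.
Proof.
case/has_cycleP=> s [+ + +]; case: s => [|a [|b [|c [|f [|h [|? ?]]]]]] //= _.
rewrite !inE !negb_or.
case/and5P=> [/and4P [_ neq_ac neq_af _] /and3P [_ neq_bf neq_bh] /andP [_ neq_ch] _ _].
case/and5P=> [ab bc cf fh /andP [ha _]].
rewrite !adjT in ab bc cf fh ha.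
apply/has_cycleP; exists [:: orb a; orb b; orb c; orb f; orb h]; split=> //=; last first.
  by rewrite !adjN_orbN.
rewrite !inE !negb_or.
rewrite !(edge_orbN_neq ab, edge_orbN_neq bc, edge_orbN_neq cf, edge_orbN_neq fh).
rewrite (orbN_neq_2arc ab bc) // (orbN_neq_2arc bc cf) // (orbN_neq_2arc cf fh) //.
rewrite eq_sym (orbN_neq_2arc fh ha) 1?eq_sym //.
by rewrite (eq_sym (orb b)) (orbN_neq_2arc ha ab) 1?eq_sym // eq_sym edge_orbN_neq.
Qed.

Lemma geodesic3_endsN x p : geodesic_transitive [set: T] e G (fun g x => g x) 3 ->
  2 < dN -> geodT x p -> size p = 3 -> ~~ adjN (orb x) (orb (last x p)).
Proof.
move=> gt3 d3 gp sp; apply/negP => adj_ends.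
have [C [Q [gQ sQ]]] := exists_geodesic_diam connectedN Norbits_gt0 d3.
move: gQ => /[dup] /and3P [/NorbitsP [u ->] _ _] gQ.
have [q gq qQ] := lift_geodesicN gQ.
have [|g Gg [gx gpq]] := gt3.2 3 isT _ _ _ _ gp gq sp.
  by rewrite -(size_map orb) qQ.
case/and3P: gQ => _ _ /eqP; rewrite sQ -qQ last_map -gpq -gx last_map => dQ.
by have := adj_dist_le1 connectedN (adjN_act Gg adj_ends); rewrite dQ.
Qed.

(* Lift the 4-cycle to a 3-arc [v0 v1 v2 v3]; depending on the distance from
   [v0] to [v3] it is a 3-geodesic, closes a 4-cycle of the graph, or yields a
   triangle of the quotient. *)
Lemma no_4cycleN : geodesic_transitive [set: T] e G (fun g x => g x) 3 ->
  ~~ cycleT 4 -> 2 < dN -> ~~ cycleN 4.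
Proof.
move=> gt3 no4 d3; apply/negP => /has_cycleP [s [+ uB +]].
case: s uB => [|B0 [|B1 [|B2 [|B3 [|? ?]]]]] //= uB _ /and5P [B01 B12 B23 B30 _].
case/and3P: (B01) => /NorbitsP [v0 B0E] _ _; subst B0.
have [v1 v01 v1E] := adjN_lift B01; subst B1.
have [v2 v12 v2E] := adjN_lift B12; subst B2.
have [v3 v23 v3E] := adjN_lift B23; subst B3.
have p03 : path e v0 [:: v1; v2; v3] by rewrite /= v01 v12 v23.
have : distT v0 v3 <= 3.
  by apply: (dist_path conn (in_setT v0) (p := [:: v1; v2; v3])); rewrite pathT.
rewrite leq_eqVlt ltnS => /orP [/eqP d03|].
  have g03 : geodT v0 [:: v1; v2; v3] by rewrite /geodesic in_setT pathT p03 /= d03.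
  by have := geodesic3_endsN gt3 d3 g03 erefl; rewrite /= (adjN_sym B30).
case/(dist_leP conn _ (in_setT v0) (in_setT v3)) => -[|w [|w' [|? ?]]] [] //=.
- by move=> _ v03; move: uB; rewrite -v03 !inE eqxx !orbT.
- rewrite andbT adjT => v0w wv3 _; subst w; apply: (negP no4); apply/has_cycleP.
  exists [:: v0; v1; v2; v3]; split=> //; first exact: (map_uniq (f := orb)).
  by rewrite /= !adjT v01 v12 v23 esym v0w.
- rewrite andbT !adjT => /andP [v0w ww'] w'v3 _; subst w'.
  exact: triangle_freeN (ltnW d3) (adjN_orbN v0w) (adjN_orbN ww') B30.
Qed.

Local Notation common B C := #|[set Z in VN | adjN B Z && adjN C Z]|.

Lemma leq_common_act g x y : g \in G ->
  common (orb x) (orb y) <= common (orb (g x)) (orb (g y)).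
Proof.
move=> Gg; rewrite -(card_imset _ (imset_inj (@perm_inj _ g))).
apply/subset_leq_card/subsetP => _ /imsetP [Z /setIdP [/NorbitsP [z ->] /andP [xz yz]] ->].
by rewrite imset_orbN ?norm_G // inE mem_Norbits !adjN_act.
Qed.

Lemma common_act g x y : g \in G -> common (orb (g x)) (orb (g y)) = common (orb x) (orb y).
Proof.
move=> Gg; apply/eqP; rewrite eqn_leq leq_common_act //.
by rewrite andbT; have := leq_common_act (g x) (g y) (groupVr Gg); rewrite !permK.
Qed.

Lemma strongly_regularN : dN = 2 -> strongly_regular VN (qadj e).
Proof.
move=> d2; split; first exact: connectedN.
have [|x [y [z [xy yz neq_xz dxz]]]] := exists_2arc_distN2; first by rewrite d2.
exists #|VN|, (common (orb x) (orb x)), (common (orb x) (orb y)), (common (orb x) (orb z)).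
split=> // [_ /NorbitsP [v ->]|B C BC|B C BVN CVN neq_BC not_BC].
- have [g Gg <-] := transitive_vertices x v; rewrite -(common_act x x Gg).
  by apply: eq_card => Z; rewrite !inE andbb.
- case/and3P: (BC) => /NorbitsP [v BE] _ _; rewrite BE in BC *.
  have [w vw <-] := adjN_lift BC; have [g Gg [<- <-]] := transitive_arcs xy vw.
  exact: common_act.
- have : distN B C <= 2 by rewrite -d2 leq_dist_diam.
  case/(dist_leP connectedN _ BVN CVN) => -[|X [|C' [|? ?]]] [] //= + + _.
  + by move=> _ BC'; rewrite BC' eqxx in neq_BC.
  + by rewrite andbT => BX XC; rewrite -XC BX in not_BC.
  rewrite andbT => /andP [BX XC'] C'C; subst C'.
  case/NorbitsP: BVN => v BE; subst B.
  have [w vw wX] := adjN_lift BX; subst X; have [u wu uC] := adjN_lift XC'; subst C.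
  have neq_vu : v != u by apply: contraNneq neq_BC => ->.
  have [g Gg [<- _ <-]] := transitive_2arcs xy yz neq_xz vw wu neq_vu.
  exact: common_act.
Qed.

Lemma quotient_girth4 : 1 < dN -> girth_is [set: T] e 4 -> girth_is VN (qadj e) 4.
Proof. by move=> d2 [_ [c4 _]]; apply: girth4 (no_3cycleN d2) (cycle4N c4). Qed.

Lemma quotient_girth5 : 1 < dN -> girth_is [set: T] e 5 ->
  girth_is VN (qadj e) 4 \/ girth_is VN (qadj e) 5.
Proof.
move=> d2 [_ [c5 _]]; have no3 := no_3cycleN d2.
have [c4|no4] := boolP (cycleN 4); [left; exact: girth4 | right; exact: girth5 (cycle5N c5)].
Qed.

Lemma quotient_girth5_eq : geodesic_transitive [set: T] e G (fun g x => g x) 3 ->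
  2 < dN -> girth_is [set: T] e 5 -> girth_is VN (qadj e) 5.
Proof.
move=> gt3 d3 [_ [c5 no_short]].
apply: girth5 (no_3cycleN (ltnW d3)) (no_4cycleN gt3 (no_short 4 isT) d3) (cycle5N c5).
Qed.

End NormalQuotient.

Theorem theorem1p1 (T : finType) (e : rel T) (G N : {group {perm T}}) :
  symmetric e -> irreflexive e ->
  (forall g, g \in G -> forall x y, e (g x) (g y) = e x y) ->
  connectedg [set: T] e ->
  geodesic_transitive [set: T] e G (fun g x => g x) 3 ->
  (girth_is [set: T] e 4 \/ girth_is [set: T] e 5) ->
  (N <| G)%g ->
  3 <= #|Norbits N| ->
  is_cover e N /\
  geodesic_transitive (Norbits N) (qadj e) (G / N)%g (@qactN _ N)
    (minn 3 (diam (Norbits N) (qadj e))) /\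
  [\/ complete_graph (Norbits N) (qadj e),
      [/\ arc_transitive (Norbits N) (qadj e) (G / N)%g (@qactN _ N) 2,
          strongly_regular (Norbits N) (qadj e) &
          girth_is (Norbits N) (qadj e) 4 \/ girth_is (Norbits N) (qadj e) 5]
    | 3 <= diam (Norbits N) (qadj e) /\
      exists g, girth_is [set: T] e g /\ girth_is (Norbits N) (qadj e) g].
Proof.
move=> esym eirr eG conn gt3 girth nNG N_orbits3.
have no_tri : ~~ has_cycle [set: T] e 3.
  by case: girth => /girth_no_triangle; apply.
have gt2 := geodesic_transitive_le conn (leqnSn 2) gt3.
split; first exact: (is_coverN (G := G)).
split; first exact: (quotient_geodesic_transitive (G := G)).
have [d_le1|d_gt1] := leqP (diam (Norbits N) (qadj e)) 1.
  by constructor 1; apply: diam_le1_complete d_le1; exact: (connectedN (G := G)).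
case: (ltngtP (diam (Norbits N) (qadj e)) 2) => [|d3|d2]; first by rewrite ltnNge d_gt1.
  constructor 3; split=> //; case: girth => [g4|g5]; [exists 4 | exists 5]; split=> //.
    exact: (quotient_girth4 (G := G)).
  exact: (quotient_girth5_eq (G := G)).
constructor 2; split.
- exact: (quotient_arc_transitive2 (G := G)).
- exact: (strongly_regularN (G := G)).
case: girth => [g4|g5]; first by left; exact: (quotient_girth4 (G := G)).
exact: (quotient_girth5 (G := G)).
Qed.
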